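(* Fix integers $T\ge 2$ and $1\le T_n\le T$, a number $\bar\epsilon_n>0$, and rates $0<q_n\le q$. Define $\epsilon_n^1,\dots,\epsilon_n^T$ recursively by $$\epsilon_n^t=\begin{cases}\dfrac{\bar\epsilon_n-\sum_{\tau=1}^{t-1}\epsilon_n^\tau}{T-t+1}\left(\dfrac{q_n}{q}\right)^2, & t<T_n,\\[2ex] \dfrac{\bar\epsilon_n-\sum_{\tau=1}^{t-1}\epsilon_n^\tau}{T-t+1}, & t\ge T_n.\end{cases}$$ Then $\epsilon_n^t\ge \epsilon_n^{t-1}$ for all $2\le t\le T_n$, and $\epsilon_n^t=\epsilon_n^{t-1}$ for all $T_n<t\le T$. In particular, the per-round privacy spent $\epsilon_n^t$ is non-decreasing in $t$ and constant from round $T_n$ on.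
   Context: In the paper's time-adaptive differentially private federated learning scheme, $\bar\epsilon_n$ is the total Rényi-DP privacy budget of client $n$, $T$ the number of rounds, $T_n$ the round at which client $n$ switches from a saving mode (sampling rate $q_n$) to a spending mode (sampling rate $q$), and $\epsilon_n^t$ the Rényi-DP privacy spent by client $n$ in round $t$. *)

From Stdlib Require Import Reals Lra Lia.
Open Scope R_scope.

Definition rate_factor (Tn : nat) (qn q : R) (t : nat) : R :=
  if Nat.ltb t Tn then (qn / q) ^ 2 else 1.

(* cum_spent T Tn ebar qn q k = sum_{tau=1}^{k} eps^tau, with
   eps^t = (ebar - sum_{tau<t} eps^tau) / (T - t + 1) * factor t. *)
Fixpoint cum_spent (T Tn : nat) (ebar qn q : R) (k : nat) : R :=
  match k with
  | O => 0
  | S k' =>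
      let prev := cum_spent T Tn ebar qn q k' in
      prev + (ebar - prev) / (INR T - INR (S k') + 1) * rate_factor Tn qn q (S k')
  end.

(* eps T Tn ebar qn q t = epsilon_n^t (meaningful for 1 <= t <= T). *)
Definition eps (T Tn : nat) (ebar qn q : R) (t : nat) : R :=
  (ebar - cum_spent T Tn ebar qn q (t - 1)) / (INR T - INR t + 1)
    * rate_factor Tn qn q t.

(** Write [R_k] for the budget left after [k] rounds, [N_t = T - t + 1] for the
    number of rounds left at round [t] and [f_t] for the rate factor, so that
    [eps^t = R_(t-1) f_t / N_t] and [R_t = R_(t-1) (1 - f_t / N_t)].  Two
    consecutive rounds therefore compare as [a f_(t-1) / (N + 1)] against
    [a (1 - f_(t-1) / (N + 1)) f_t / N] with [a = R_(t-2) >= 0] and [N = N_t].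
    In saving mode [f_(t-1) = r = (q_n/q)^2 <= f_t], and the difference is at
    least [a r (1 - r) / (N (N + 1)) >= 0]; in spending mode both factors are
    [1] and the two sides coincide. *)

From Stdlib Require Import Reals Lra Lia.
Open Scope R_scope.

Definition remaining (T Tn : nat) (ebar qn q : R) (k : nat) : R :=
  ebar - cum_spent T Tn ebar qn q k.

Definition rounds_left (T t : nat) : R := INR T - INR t + 1.

Lemma rounds_left_succ (T t : nat) : rounds_left T t = rounds_left T (S t) + 1.
Proof. unfold rounds_left; rewrite S_INR; ring. Qed.

Lemma rounds_left_ge1 (T t : nat) : (t <= T)%nat -> 1 <= rounds_left T t.
Proof. intros htT; apply le_INR in htT; unfold rounds_left; lra. Qed.

Lemma div_le_one (a b : R) : 0 < b -> a <= b -> a / b <= 1.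
Proof.
  intros hb hab; apply (Rmult_le_reg_r b); [lra|].
  unfold Rdiv; rewrite Rmult_assoc, Rinv_l; lra.
Qed.

Lemma sq_ratio_bounds (qn q : R) : 0 < qn -> qn <= q -> 0 < (qn / q) ^ 2 <= 1.
Proof.
  intros hqn hq.
  assert (hpos : 0 < qn / q) by (apply Rdiv_lt_0_compat; lra).
  assert (hle : qn / q <= 1) by (apply div_le_one; lra).
  split; [apply pow_lt; lra | simpl; nra].
Qed.

Lemma rate_factor_saving (Tn : nat) (qn q : R) (t : nat) :
  (t < Tn)%nat -> rate_factor Tn qn q t = (qn / q) ^ 2.
Proof. intros ht; unfold rate_factor; apply Nat.ltb_lt in ht; now rewrite ht. Qed.

Lemma rate_factor_spending (Tn : nat) (qn q : R) (t : nat) :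
  (Tn <= t)%nat -> rate_factor Tn qn q t = 1.
Proof. intros ht; unfold rate_factor; apply Nat.ltb_ge in ht; now rewrite ht. Qed.

Lemma rate_factor_bounds (Tn : nat) (qn q : R) (t : nat) : 0 < qn -> qn <= q ->
  (qn / q) ^ 2 <= rate_factor Tn qn q t <= 1.
Proof.
  intros hqn hq; pose proof (sq_ratio_bounds qn q hqn hq).
  unfold rate_factor; destruct (Nat.ltb t Tn); lra.
Qed.

Lemma remaining_succ (T Tn : nat) (ebar qn q : R) (k : nat) :
  remaining T Tn ebar qn q (S k) =
  remaining T Tn ebar qn q k * (1 - rate_factor Tn qn q (S k) / rounds_left T (S k)).
Proof. unfold remaining, rounds_left; cbn [cum_spent]; unfold Rdiv; ring. Qed.

Lemma eps_succ (T Tn : nat) (ebar qn q : R) (k : nat) :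
  eps T Tn ebar qn q (S k) =
  remaining T Tn ebar qn q k / rounds_left T (S k) * rate_factor Tn qn q (S k).
Proof. unfold eps; now rewrite Nat.sub_succ, Nat.sub_0_r. Qed.

Lemma remaining_nonneg (T Tn : nat) (ebar qn q : R) (k : nat) :
  0 < ebar -> 0 < qn -> qn <= q -> (k <= T)%nat -> 0 <= remaining T Tn ebar qn q k.
Proof.
  intros hebar hqn hq; induction k as [|k IH]; intros hkT.
  - unfold remaining; simpl; lra.
  - rewrite remaining_succ.
    pose proof (rate_factor_bounds Tn qn q (S k) hqn hq) as [_ hf].
    pose proof (rounds_left_ge1 T (S k) hkT) as hN.
    apply Rmult_le_pos; [apply IH; lia|].
    assert (rate_factor Tn qn q (S k) / rounds_left T (S k) <= 1)
      by (apply div_le_one; lra).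
    lra.
Qed.

Lemma budget_step_le (a N r f : R) :
  0 <= a -> 0 < N -> 0 <= r <= 1 -> r <= f ->
  a / (N + 1) * r <= a * (1 - r / (N + 1)) / N * f.
Proof.
  intros ha hN hr hrf.
  assert (gap : a * (1 - r / (N + 1)) / N * f - a / (N + 1) * r
                = a / (N * (N + 1)) * ((N + 1 - r) * (f - r) + r * (1 - r)))
    by (field; lra).
  assert (0 <= a / (N * (N + 1))) by (apply Rle_mult_inv_pos; nra).
  assert (0 <= (N + 1 - r) * (f - r) + r * (1 - r)) by nra.
  nra.
Qed.

Lemma budget_step_eq (a N : R) :
  0 < N -> a / (N + 1) * 1 = a * (1 - 1 / (N + 1)) / N * 1.
Proof. intros hN; field; lra. Qed.

Lemma eps_consecutive (T Tn : nat) (ebar qn q : R) (m : nat) :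
  eps T Tn ebar qn q (S m) =
    remaining T Tn ebar qn q m / (rounds_left T (S (S m)) + 1)
    * rate_factor Tn qn q (S m) /\
  eps T Tn ebar qn q (S (S m)) =
    remaining T Tn ebar qn q m
    * (1 - rate_factor Tn qn q (S m) / (rounds_left T (S (S m)) + 1))
    / rounds_left T (S (S m)) * rate_factor Tn qn q (S (S m)).
Proof.
  rewrite !eps_succ, remaining_succ, (rounds_left_succ T (S m)); split; reflexivity.
Qed.

Theorem mainTheorem2 (T Tn : nat) (ebar qn q : R) :
  (2 <= T)%nat -> (1 <= Tn)%nat -> (Tn <= T)%nat ->
  0 < ebar -> 0 < qn -> qn <= q ->
  (forall t : nat, (2 <= t)%nat -> (t <= Tn)%nat ->
     eps T Tn ebar qn q (t - 1) <= eps T Tn ebar qn q t) /\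
  (forall t : nat, (Tn < t)%nat -> (t <= T)%nat ->
     eps T Tn ebar qn q t = eps T Tn ebar qn q (t - 1)).
Proof.
  intros _ hTn hTnT hebar hqn hq.
  split; intros t ht htT; destruct t as [|[|m]]; try lia;
    replace (S (S m) - 1)%nat with (S m) by lia;
    destruct (eps_consecutive T Tn ebar qn q m) as [-> ->];
    pose proof (rounds_left_ge1 T (S (S m)) ltac:(lia)) as hN.
  - rewrite (rate_factor_saving Tn qn q (S m)) by lia.
    apply budget_step_le.
    + apply remaining_nonneg; auto; lia.
    + lra.
    + pose proof (sq_ratio_bounds qn q hqn hq); lra.
    + apply rate_factor_bounds; assumption.
  - rewrite !rate_factor_spending by lia.
    symmetry; apply budget_step_eq; lra.
Qed.
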